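(* Let $A\in\mathbb{R}^{m\times n}$, $b\in\mathbb{R}^m$, $f(x)=\frac12\|Ax-b\|^2$, and let $x^k,x^{k-1}\in\mathbb{R}^n$ with $\nabla f(x^k)\neq 0$ and $x^k\neq x^{k-1}$. Let $g=\nabla f(x^k)/\|\nabla f(x^k)\|$, $d=(x^k-x^{k-1})/\|x^k-x^{k-1}\|$, $\epsilon=g^td$, and assume $\epsilon^2<1$. Let $S_{11}=g^tA^tAg$, $S_{12}=g^tA^tAd$, $S_{22}=d^tA^tAd$, $\eta_1=1-\epsilon^2$, $\eta_2=-S_{11}-S_{22}+2\epsilon S_{12}$, $\eta_3=S_{11}S_{22}-S_{12}^2$, $$\sigma=\frac{-\eta_2+\sqrt{\eta_2^2-4\eta_1\eta_3}}{2\eta_1},$$ let $(\tau,\rho)$ be the solution of $$\begin{pmatrix}1&\epsilon\\ \epsilon&1\end{pmatrix}\begin{pmatrix}\tau\\ \rho\end{pmatrix}=\begin{pmatrix}\sqrt{\sigma-S_{11}}\\ \sqrt{\sigma-S_{22}}\,\mathrm{sgn}(\epsilon\sigma-S_{12})\end{pmatrix},$$ and $u=\tau g+\rho d$. Then $H=\sigma\mathbf I-uu^t\succeq 0$.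
   Context: $\|\cdot\|$ denotes the Euclidean norm; $\mathrm{sgn}$ is the sign function; $\mathbf I$ is the identity; $\succeq 0$ means positive semidefinite. Under these assumptions $\eta_2^2-4\eta_1\eta_3\ge 0$ and $\sigma\ge S_{11},S_{22}$, so all quantities are real. *)

From HB Require Import structures.
From mathcomp Require Import all_boot all_order all_algebra.
Set Implicit Arguments. Unset Strict Implicit. Unset Printing Implicit Defensive.
Import Order.TTheory GRing.Theory Num.Theory.
Local Open Scope ring_scope.

Definition dotv (R : rcfType) (n : nat) (u v : 'cV[R]_n) : R := (u^T *m v) 0 0.

Definition enorm (R : rcfType) (n : nat) (v : 'cV[R]_n) : R := Num.sqrt (dotv v v).

Definition grad_f (R : rcfType) (m n : nat) (A : 'M[R]_(m, n)) (b : 'cV[R]_m)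
  (x : 'cV[R]_n) : 'cV[R]_n := A^T *m (A *m x - b).

Definition psd (R : rcfType) (n : nat) (H : 'M[R]_n) : Prop :=
  H^T = H /\ forall v : 'cV[R]_n, 0 <= (v^T *m H *m v) 0 0.

From HB Require Import structures.
From mathcomp Require Import all_boot all_order all_algebra.
From mathcomp Require Import ring lra.
Import Order.TTheory GRing.Theory Num.Theory.
Set Implicit Arguments. Unset Strict Implicit. Unset Printing Implicit Defensive.
Local Open Scope ring_scope.

(* The quadratic form of [H] is [v |-> sigma |v|^2 - <v, u>^2], so by Cauchy-Schwarz
   [H] is positive semidefinite as soon as [|u|^2 <= sigma].  Since [g] and [d] are
   unit vectors, [|u|^2 = tau^2 + 2 eps tau rho + rho^2], and inverting the Gram matrix
   [[1, eps], [eps, 1]] of the defining linear system gives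
   [(1 - eps^2) |u|^2 = y1^2 - 2 eps y1 y2 + y2^2] for its right-hand side [(y1, y2)].
   Now [sigma] is the larger root of
   [eta1 s^2 + eta2 s + eta3 = (s - S11)(s - S22) - (eps s - S12)^2], hence
   [y1^2 = sigma - S11], [y2^2 <= sigma - S22] and [y1 y2 = eps sigma - S12], so that
   [(1 - eps^2) |u|^2 <= 2 eta1 sigma + eta2].  Finally [eta1 sigma + eta2 <= 0]: the
   product [eta3 / eta1] of the roots is nonnegative (Cauchy-Schwarz for [A g] and
   [A d]), so [sigma] is at most their sum [- eta2 / eta1]. *)

Section InnerProduct.
Variables (R : rcfType) (n : nat).
Implicit Types u v w : 'cV[R]_n.

Lemma dotvC u v : dotv u v = dotv v u.
Proof.
rewrite /dotv; have -> : (u^T *m v) 0 0 = (u^T *m v)^T 0 0 by rewrite [RHS]mxE.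
by rewrite trmx_mul trmxK.
Qed.

Lemma dotvDl u v w : dotv (u + v) w = dotv u w + dotv v w.
Proof. by rewrite /dotv linearD mulmxDl mxE. Qed.

Lemma dotvZl a u w : dotv (a *: u) w = a * dotv u w.
Proof. by rewrite /dotv linearZ -scalemxAl mxE. Qed.

Lemma dotvDr u v w : dotv w (u + v) = dotv w u + dotv w v.
Proof. by rewrite dotvC dotvDl !(dotvC w). Qed.

Lemma dotvZr a u w : dotv w (a *: u) = a * dotv w u.
Proof. by rewrite dotvC dotvZl dotvC. Qed.

Lemma dotv0l v : dotv 0 v = 0.
Proof. by rewrite /dotv linear0 mul0mx mxE. Qed.

Lemma dotvE u v : dotv u v = \sum_i u i 0 * v i 0.
Proof. by rewrite /dotv mxE; apply: eq_bigr => i _; rewrite mxE. Qed.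

Lemma dotv_ge0 u : 0 <= dotv u u.
Proof. by rewrite dotvE sumr_ge0 // => i _; rewrite -expr2 sqr_ge0. Qed.

Lemma dotv_eq0 u : dotv u u = 0 -> u = 0.
Proof.
rewrite dotvE => /psumr_eq0P sum0; apply/matrixP => i j; rewrite (ord1 j) mxE.
apply/eqP; rewrite -sqrf_eq0 expr2; apply/eqP/sum0 => // k _.
by rewrite -expr2 sqr_ge0.
Qed.

Lemma dotv_cauchy_schwarz u v : dotv u v ^+ 2 <= dotv u u * dotv v v.
Proof.
have [u0|uu_neq0] := eqVneq (dotv u u) 0.
  by rewrite (dotv_eq0 u0) !dotv0l expr0n mul0r.
have uu_gt0 : 0 < dotv u u by rewrite lt0r uu_neq0 dotv_ge0.
set a := dotv u u; set b := dotv u v; set c := dotv v v.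
have := dotv_ge0 (a *: v - b *: u).
have -> : dotv (a *: v - b *: u) (a *: v - b *: u) = a * (a * c - b ^+ 2).
  by rewrite -scaleNr !(dotvDl, dotvDr, dotvZl, dotvZr) (dotvC v u) -/a -/b -/c; ring.
by rewrite pmulr_rge0 // subr_ge0.
Qed.

Lemma dotv_normalize v : v != 0 ->
  dotv ((enorm v)^-1 *: v) ((enorm v)^-1 *: v) = 1.
Proof.
move=> v_neq0; have vv_gt0 : 0 < dotv v v.
  by rewrite lt0r dotv_ge0 andbT; apply: contra_neq v_neq0 => /dotv_eq0.
rewrite dotvZl dotvZr /enorm mulrA -expr2 exprVn sqr_sqrtr ?ltW //.
by rewrite mulVf ?gt_eqF.
Qed.

Lemma dotv_mulmx m (A : 'M[R]_(m, n)) u v :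
  dotv u (A^T *m A *m v) = dotv (A *m u) (A *m v).
Proof. by rewrite /dotv trmx_mul !mulmxA. Qed.

Lemma dotv_lincomb t r u v : dotv (t *: u + r *: v) (t *: u + r *: v)
  = t ^+ 2 * dotv u u + 2 * t * r * dotv u v + r ^+ 2 * dotv v v.
Proof. by rewrite !(dotvDl, dotvDr, dotvZl, dotvZr) (dotvC v u); ring. Qed.

Lemma quad_scalar_sub_outer s u v :
  (v^T *m (s%:M - u *m u^T) *m v) 0 0 = s * dotv v v - dotv v u ^+ 2.
Proof.
rewrite mulmxBr mulmxBl mxE [in RHS]expr2 mul_mx_scalar -scalemxAl mxE.
rewrite [X in _ + X]mxE !mulmxA -(mulmxA (v^T *m u)) [X in _ - X]mxE big_ord1.
by rewrite -/(dotv v v) -/(dotv v u) -/(dotv u v) (dotvC u v).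
Qed.

Lemma psd_scalar_sub_outer s u : dotv u u <= s -> psd (s%:M - u *m u^T).
Proof.
move=> uu_le; split; first by rewrite linearB /= tr_scalar_mx trmx_mul trmxK.
move=> v; rewrite quad_scalar_sub_outer subr_ge0.
rewrite (le_trans (dotv_cauchy_schwarz v u)) //.
by rewrite mulrC ler_wpM2r ?dotv_ge0.
Qed.

End InnerProduct.

Section LargerRoot.
Variable R : rcfType.
Implicit Types a b c p : R.

Definition larger_root a b c := (- b + Num.sqrt (b ^+ 2 - 4 * a * c)) / (2 * a).

Lemma larger_rootE a b c : 0 < a ->
  2 * a * larger_root a b c + b = Num.sqrt (b ^+ 2 - 4 * a * c).
Proof. by move=> a_gt0; rewrite /larger_root; field; lra. Qed.

Lemma larger_root_eq0 a b c : 0 < a -> 0 <= b ^+ 2 - 4 * a * c ->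
  a * larger_root a b c ^+ 2 + b * larger_root a b c + c = 0.
Proof.
move=> a_gt0 D_ge0; set x := larger_root a b c.
have : 4 * a * (a * x ^+ 2 + b * x + c) = (2 * a * x + b) ^+ 2 - (b ^+ 2 - 4 * a * c).
  by ring.
rewrite larger_rootE // sqr_sqrtr // subrr => /eqP.
by rewrite mulf_eq0 => /orP [/eqP|/eqP //]; lra.
Qed.

Lemma larger_root_ge a b c p : 0 < a -> (2 * a * p + b) ^+ 2 <= b ^+ 2 - 4 * a * c ->
  p <= larger_root a b c.
Proof.
move=> a_gt0 le_pD.
have : 2 * a * p + b <= 2 * a * larger_root a b c + b.
  rewrite larger_rootE // (le_trans (ler_norm _)) // -sqrtr_sqr ler_sqrt //.
  exact: le_trans (sqr_ge0 _) le_pD.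
by rewrite lerD2r ler_pM2l ?mulr_gt0.
Qed.

Lemma larger_root_le_sum a b c : 0 < a -> b <= 0 -> 0 <= c ->
  a * larger_root a b c + b <= 0.
Proof.
move=> a_gt0 b_le0 c_ge0.
have : Num.sqrt (b ^+ 2 - 4 * a * c) <= - b.
  rewrite -[- b]ler0_norm // -sqrtr_sqr ler_sqrt ?sqr_ge0 // lerBlDr lerDl.
  by rewrite !mulr_ge0 // ltW.
rewrite -larger_rootE //; lra.
Qed.

Lemma sqrt_mul_sg p q c : 0 <= p -> 0 <= q -> p * q = c ^+ 2 ->
  Num.sqrt p * (Num.sqrt q * Num.sg c) = c.
Proof.
by move=> p_ge0 q_ge0 pq; rewrite mulrA -sqrtrM // pq sqrtr_sqr mulrC -numEsg.
Qed.

Lemma sqr_sqrt_mul_sg_le q c : 0 <= q -> (Num.sqrt q * Num.sg c) ^+ 2 <= q.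
Proof.
move=> q_ge0; rewrite exprMn sqr_sg sqr_sqrtr //.
by case: (c != 0); rewrite ?mulr1 ?mulr0.
Qed.

End LargerRoot.

Section GramSigma.
Variables (R : rcfType) (e s11 s12 s22 : R).
Hypothesis e2_lt1 : e ^+ 2 < 1.

Definition gram_sigma :=
  larger_root (1 - e ^+ 2) (- s11 - s22 + 2 * e * s12) (s11 * s22 - s12 ^+ 2).

Let eta1_gt0 : 0 < 1 - e ^+ 2.
Proof. by rewrite subr_gt0. Qed.

Lemma gram_discriminant_ge :
  (2 * (1 - e ^+ 2) * s11 + (- s11 - s22 + 2 * e * s12)) ^+ 2
  <= (- s11 - s22 + 2 * e * s12) ^+ 2 - 4 * (1 - e ^+ 2) * (s11 * s22 - s12 ^+ 2).
Proof.
have -> : (- s11 - s22 + 2 * e * s12) ^+ 2 - 4 * (1 - e ^+ 2) * (s11 * s22 - s12 ^+ 2)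
  = (2 * (1 - e ^+ 2) * s11 + (- s11 - s22 + 2 * e * s12)) ^+ 2
    + 4 * (1 - e ^+ 2) * (e * s11 - s12) ^+ 2 by ring.
rewrite lerDl mulr_ge0 ?sqr_ge0 // mulr_ge0 //; exact: ltW.
Qed.

Lemma gram_sigma_ge : s11 <= gram_sigma.
Proof. exact: larger_root_ge eta1_gt0 gram_discriminant_ge. Qed.

Lemma gram_sigma_root :
  (gram_sigma - s11) * (gram_sigma - s22) = (e * gram_sigma - s12) ^+ 2.
Proof.
apply/eqP; rewrite -subr_eq0; apply/eqP.
rewrite -[RHS](larger_root_eq0 eta1_gt0 (le_trans (sqr_ge0 _) gram_discriminant_ge)).
by rewrite /gram_sigma; ring.
Qed.

Hypotheses (s11_ge0 : 0 <= s11) (s22_ge0 : 0 <= s22).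
Hypothesis s12_sqr_le : s12 ^+ 2 <= s11 * s22.

Lemma gram_eta2_le0 : - s11 - s22 + 2 * e * s12 <= 0.
Proof.
have am_gm : s11 * s22 <= ((s11 + s22) / 2) ^+ 2.
  have -> : ((s11 + s22) / 2) ^+ 2 = s11 * s22 + (s11 - s22) ^+ 2 / 4 by field.
  by rewrite lerDl divr_ge0 ?sqr_ge0.
have : (e * s12) ^+ 2 <= ((s11 + s22) / 2) ^+ 2.
  rewrite exprMn; apply: le_trans am_gm; apply: le_trans s12_sqr_le.
  exact: ler_piMl (sqr_ge0 s12) (ltW e2_lt1).
have : 0 <= (s11 + s22) / 2 by rewrite divr_ge0 ?addr_ge0.
nra.
Qed.

Lemma gram_sigma_le_sum :
  (1 - e ^+ 2) * gram_sigma + (- s11 - s22 + 2 * e * s12) <= 0.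
Proof. by apply: larger_root_le_sum gram_eta2_le0 _ => //; rewrite subr_ge0. Qed.

End GramSigma.

Lemma gram_sigmaC (R : rcfType) (e s11 s12 s22 : R) :
  gram_sigma e s11 s12 s22 = gram_sigma e s22 s12 s11.
Proof. by rewrite /gram_sigma (addrC (- s11)) (mulrC s11). Qed.

Lemma gram_norm_le_sigma (R : rcfType) (e s11 s12 s22 t r : R) : e ^+ 2 < 1 ->
    0 <= s11 -> 0 <= s22 -> s12 ^+ 2 <= s11 * s22 ->
  let sigma := gram_sigma e s11 s12 s22 in
  t + e * r = Num.sqrt (sigma - s11) ->
  e * t + r = Num.sqrt (sigma - s22) * Num.sg (e * sigma - s12) ->
  t ^+ 2 + 2 * e * t * r + r ^+ 2 <= sigma.
Proof.
move=> e2_lt1 s11_ge0 s22_ge0 s12_sqr_le sigma y1E y2E.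
have s11_le : 0 <= sigma - s11 by rewrite subr_ge0 gram_sigma_ge.
have s22_le : 0 <= sigma - s22 by rewrite subr_ge0 /sigma gram_sigmaC gram_sigma_ge.
have y1y2 : (t + e * r) * (e * t + r) = e * sigma - s12.
  by rewrite y1E y2E sqrt_mul_sg // gram_sigma_root.
have y1_sqr : (t + e * r) ^+ 2 = sigma - s11 by rewrite y1E sqr_sqrtr.
have y2_sqr : (e * t + r) ^+ 2 <= sigma - s22 by rewrite y2E sqr_sqrt_mul_sg_le.
have gram_inv : (1 - e ^+ 2) * (t ^+ 2 + 2 * e * t * r + r ^+ 2)
    = (t + e * r) ^+ 2 - 2 * e * ((t + e * r) * (e * t + r)) + (e * t + r) ^+ 2.
  by ring.
have := gram_sigma_le_sum e2_lt1 s11_ge0 s22_ge0 s12_sqr_le; rewrite -/sigma => le_sum.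
rewrite -(ler_pM2l (_ : 0 < 1 - e ^+ 2)) ?subr_gt0 // gram_inv y1y2 y1_sqr.
lra.
Qed.

Theorem claim3 (R : rcfType) (m n : nat) (A : 'M[R]_(m, n)) (b : 'cV[R]_m)
    (xk xk1 : 'cV[R]_n) :
  grad_f A b xk != 0 ->
  xk != xk1 ->
  let g := (enorm (grad_f A b xk))^-1 *: grad_f A b xk in
  let d := (enorm (xk - xk1))^-1 *: (xk - xk1) in
  let eps := dotv g d in
  eps ^+ 2 < 1 ->
  let AtA := A^T *m A in
  let S11 := dotv g (AtA *m g) in
  let S12 := dotv g (AtA *m d) in
  let S22 := dotv d (AtA *m d) in
  let eta1 := 1 - eps ^+ 2 in
  let eta2 := - S11 - S22 + 2 * eps * S12 in
  let eta3 := S11 * S22 - S12 ^+ 2 in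
  let sigma := (- eta2 + Num.sqrt (eta2 ^+ 2 - 4 * eta1 * eta3)) / (2 * eta1) in
  forall tau rho : R,
    tau + eps * rho = Num.sqrt (sigma - S11) ->
    eps * tau + rho = Num.sqrt (sigma - S22) * Num.sg (eps * sigma - S12) ->
    let u := tau *: g + rho *: d in
    psd (sigma%:M - u *m u^T).
Proof.
move=> grad_neq0 xk_neq g d eps eps2_lt1 AtA S11 S12 S22 eta1 eta2 eta3 sigma
  tau rho tauE rhoE u.
have gg : dotv g g = 1 by apply: dotv_normalize.
have dd : dotv d d = 1 by apply: dotv_normalize; rewrite subr_eq0.
apply: psd_scalar_sub_outer.
have -> : dotv u u = tau ^+ 2 + 2 * eps * tau * rho + rho ^+ 2.
  by rewrite dotv_lincomb gg dd -/eps; ring.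
apply: gram_norm_le_sigma tauE rhoE => //.
- by rewrite /S11 dotv_mulmx dotv_ge0.
- by rewrite /S22 dotv_mulmx dotv_ge0.
- by rewrite /S11 /S12 /S22 !dotv_mulmx dotv_cauchy_schwarz.
Qed.
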